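(* Let $n\ge2$. The space of homogeneous quasi-morphisms $F_n\to\mathbb{R}$ that vanish on every element of $\mathrm{cut}_n$ is infinite dimensional.
   Context: Fix a basis $a_1,\dots,a_n$ of $F_n$; $\bar g$ denotes $g^{-1}$. For a cyclically reduced word $w=l_1\cdots l_k$, its Whitehead graph $\Omega(w)$ has $2n$ vertices labeled $a_1,\dots,a_n,\bar a_1,\dots,\bar a_n$; for each pair of adjacent letters $l_il_{i+1}$ there is an edge joining $l_i$ and $\bar l_{i+1}$, and there is additionally an edge joining $l_k$ and $\bar l_1$; multiple edges between the same pair of vertices are replaced by a single edge. The Whitehead graph of a non-cyclically-reduced word is that of its cyclic reduction. A vertex is a cut vertex if removing it and its incident edges disconnects the graph. $\mathrm{cut}_n$ is the set of $w\in F_n$ such that $\Omega(w)$ has a cut vertex. A quasi-morphism $q:F_n\to\mathbb R$ satisfies $\sup_{g,h}|q(gh)-q(g)-q(h)|<\infty$; it is homogeneous if $q(g^k)=kq(g)$ for all $g$, $k\in\mathbb Z$. *)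

From Stdlib Require Import Reals ZArith.
From mathcomp Require Import all_boot.

Set Implicit Arguments.
Unset Strict Implicit.
Unset Printing Implicit Defensive.

(* Letters of F_n: (i, false) is a_i, (i, true) is \bar a_i. *)
Definition letter (n : nat) : finType := ('I_n * bool)%type.

Definition linv (n : nat) (x : letter n) : letter n := (x.1, ~~ x.2).

Fixpoint reduced (n : nat) (w : seq (letter n)) : bool :=
  match w with
  | x :: ((y :: _) as t) => (y != linv x) && reduced t
  | _ => true
  end.

Definition push (n : nat) (x : letter n) (s : seq (letter n)) : seq (letter n) :=
  match s with
  | y :: s' => if y == linv x then s' else x :: s
  | [::] => [:: x]
  end.

Definition red (n : nat) (w : seq (letter n)) : seq (letter n) := foldr (@push n) [::] w.

Lemma reduced_behead (n : nat) (x : letter n) s : reduced (x :: s) -> reduced s.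
Proof. by case: s => [|y s] //= /andP[]. Qed.

Lemma red_reduced (n : nat) (w : seq (letter n)) : reduced (red w).
Proof.
elim: w => [|x w IH] //=; rewrite -/(red w) /push.
case E: (red w) IH => [|y s] // IH.
case: ifP => [_|Hy]; first exact: reduced_behead IH.
by rewrite /= Hy; move: IH; rewrite /=.
Qed.

Definition FG (n : nat) := {w : seq (letter n) | reduced w}.

Definition mkFG (n : nat) (w : seq (letter n)) : FG n := exist _ (red w) (red_reduced w).

Definition word_inv (n : nat) (w : seq (letter n)) : seq (letter n) := rev (map (@linv n) w).

Definition fmul (n : nat) (g h : FG n) : FG n := mkFG (proj1_sig g ++ proj1_sig h).

Definition fpow (n : nat) (g : FG n) (k : Z) : FG n :=
  if (0 <=? k)%Z then mkFG (flatten (nseq (Z.to_nat k) (proj1_sig g)))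
  else mkFG (flatten (nseq (Z.to_nat (- k)) (word_inv (proj1_sig g)))).

Definition cyc_step (n : nat) (w : seq (letter n)) : seq (letter n) :=
  match w with
  | x :: ((_ :: _) as t) => if last x t == linv x then take (size t).-1 t else w
  | _ => w
  end.

Definition cyc_red (n : nat) (w : seq (letter n)) : seq (letter n) :=
  ssrnat.iter (size w) (@cyc_step n) w.

(* Whitehead graph of a cyclically reduced word w = l_1 ... l_k:
   an edge {l_i, \bar l_{i+1}} for each cyclically adjacent pair (indices mod k). *)
Definition wh_edges (n : nat) (w : seq (letter n)) : seq (letter n * letter n) :=
  map (fun p => (p.1, linv p.2)) (zip w (rot 1 w)).

Definition wh_adj (n : nat) (w : seq (letter n)) : rel (letter n) :=
  fun u v => has (fun p => (p == (u, v)) || (p == (v, u))) (wh_edges w).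

Definition cut_vertex (n : nat) (e : rel (letter n)) (v : letter n) : Prop :=
  exists x y : letter n, [/\ x != v, y != v &
    ~~ connect (fun a b => [&& e a b, a != v & b != v]) x y].

Definition Omega (n : nat) (g : FG n) : rel (letter n) := wh_adj (cyc_red (proj1_sig g)).

Definition in_cut (n : nat) (g : FG n) : Prop := exists v, cut_vertex (Omega g) v.

Definition quasimorphism (n : nat) (q : FG n -> R) : Prop :=
  exists D : R, forall g h : FG n, Rle (Rabs (Rminus (Rminus (q (fmul g h)) (q g)) (q h))) D.

Definition homogeneous (n : nat) (q : FG n -> R) : Prop :=
  forall (g : FG n) (k : Z), q (fpow g k) = Rmult (IZR k) (q g).

Definition lin_indep (n k : nat) (Q : nat -> FG n -> R) : Prop :=
  forall c : nat -> R,
    (forall g : FG n, foldr Rplus R0 (map (fun i => Rmult (c i) (Q i g)) (iota 0 k)) = R0) ->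
    forall i, (i < k)%N -> c i = R0.

(* Let [u] be a reduced word.  Counting occurrences of [u] minus occurrences of
   [u^-1] (Brooks) gives a quasimorphism; its homogenization counts cyclic
   occurrences in the cyclic reduction.  If [u] or [u^-1] occurs cyclically in
   the cyclic reduction of [g], then Omega(g) contains every edge read off two
   consecutive letters of [u].  For
     u_i = a^(M i + 1) (a b_1 a b_1^-1) ... (a b_r a b_r^-1) a,
   with [b_j] the other generators, these edges join [a] to [a^-1] and join each
   other vertex to both [a] and [a^-1]; such a graph has no cut vertex, so the
   homogenized quasimorphism of [u_i] vanishes on cut_n.  Its value at [u_j] is
   [0] for [j < i], because the leading run of [a]'s in [u_i] is longer than
   [u_j], and positive for [j = i]: the matrix of values is triangular, which
   gives linear independence. *)

From Stdlib Require Import Reals ZArith Lia.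
From mathcomp Require Import all_boot zify.

Set Implicit Arguments.
Unset Strict Implicit.
Unset Printing Implicit Defensive.

Local Notation wpow k w := (flatten (nseq k w)).

Section Occurrences.
Variables (T : eqType) (x0 : T).

Definition occurs_at (u w : seq T) p :=
  (p + size u <= size w) && all (fun m => nth x0 w (p + m) == nth x0 u m) (iota 0 (size u)).

Definition occ (u w : seq T) := count (occurs_at u w) (iota 0 (size w)).

Definition cyc_occurs_at (u w : seq T) p :=
  all (fun m => nth x0 w ((p + m) %% size w) == nth x0 u m) (iota 0 (size u)).

Definition cyc_occ (u w : seq T) := count (cyc_occurs_at u w) (iota 0 (size w)).

Lemma count_iota_le_addn (P Q : pred nat) s k :
  (forall p, p < s -> P p -> Q p || (s < p + k)) ->
  count P (iota 0 s) <= count Q (iota 0 s) + k.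
Proof.
move=> PQ; pose B p := s - k <= p.
have count_B : count B (iota 0 s) <= k.
  case: (leqP k s) => hk; last first.
    by rewrite (leq_trans (count_size _ _)) // size_iota ltnW.
  rewrite -{1}(subnK hk) iotaD count_cat add0n.
  rewrite (@eq_in_count _ _ pred0) ?count_pred0 ?add0n; last first.
    by move=> p; rewrite mem_iota /B => /andP[_ hp] /=; lia.
  by rewrite (leq_trans (count_size _ _)) ?size_iota.
apply: (@leq_trans (count (predU Q B) (iota 0 s))).
  apply: sub_count => p /= hP; rewrite /B; case: (ltnP p s) => hp; last lia.
  by case/orP: (PQ p hp hP) => [->//|h]; lia.
rewrite (leq_trans (leq_addr (count (predI Q B) (iota 0 s)) _)) //.
by rewrite count_predUI leq_add2l.
Qed.

Lemma occurs_at_shift u s t q : occurs_at u (s ++ t) (size s + q) = occurs_at u t q.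
Proof.
rewrite /occurs_at size_cat -addnA leq_add2l; congr (_ && _).
by apply: eq_all => m; rewrite nth_cat ltnNge -addnA leq_addr /= addKn.
Qed.

Lemma occurs_at_catl u s t p :
  p + size u <= size s -> occurs_at u (s ++ t) p = occurs_at u s p.
Proof.
move=> hp; rewrite /occurs_at size_cat hp (leq_trans hp (leq_addr _ _)).
apply: eq_in_all => m; rewrite mem_iota => /andP[_ hm].
by rewrite nth_cat ifT //; lia.
Qed.

Lemma occ_cat u s t : occ u s + occ u t <= occ u (s ++ t) <= occ u s + occ u t + size u.
Proof.
rewrite /occ size_cat iotaD add0n count_cat.
have -> : count (occurs_at u (s ++ t)) (iota (size s) (size t)) = occ u t.
  rewrite -(addn0 (size s)) iotaDl count_map.
  by apply: eq_count => q; exact: occurs_at_shift.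
apply/andP; split.
  rewrite leq_add2r; apply: sub_count => p hp.
  by rewrite occurs_at_catl //; case/andP: hp.
rewrite addnAC leq_add2r; apply: count_iota_le_addn => p _ hp.
case: (leqP (p + size u) (size s)) => h; last by rewrite orbT.
by rewrite -(occurs_at_catl t h) hp.
Qed.

Lemma occ_le_cyc_occ u w : occ u w <= cyc_occ u w <= occ u w + size u.
Proof.
have same_at p : p + size u <= size w -> cyc_occurs_at u w p = occurs_at u w p.
  move=> h; rewrite /occurs_at h; apply: eq_in_all => m.
  by rewrite mem_iota => /andP[_ hm]; rewrite modn_small //; lia.
apply/andP; split.
  by apply: sub_count => p hp; rewrite same_at //; case/andP: hp.
apply: count_iota_le_addn => p _ hp.
case: (leqP (p + size u) (size w)) => h; last by rewrite orbT.
by rewrite -same_at // hp.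
Qed.

Lemma wpowS k (w : seq T) : wpow k.+1 w = wpow k w ++ w.
Proof. by elim: k => [|k IH] /=; rewrite ?cats0 // -catA -IH. Qed.

Lemma size_wpow k (w : seq T) : size (wpow k w) = k * size w.
Proof. by elim: k => [|k IH] //=; rewrite size_cat IH mulSn. Qed.

Lemma nth_wpow k (w : seq T) i : i < k * size w -> nth x0 (wpow k w) i = nth x0 w (i %% size w).
Proof.
elim: k i => [|k IH] i //=; rewrite mulSn => hi; rewrite nth_cat.
case: (ltnP i (size w)) => h; first by rewrite modn_small.
rewrite IH; last by lia.
by rewrite -{2}(subnK h) modnDr.
Qed.

Lemma count_iota_mod (f : pred nat) d k :
  count (fun p => f (p %% d)) (iota 0 (k * d)) = k * count f (iota 0 d).
Proof.
elim: k => [|k IH] //; rewrite mulSn iotaD add0n count_cat.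
rewrite -(addn0 d) iotaDl addn0 count_map [in RHS]mulSn -IH; congr (_ + _).
  by apply: eq_in_count => p; rewrite mem_iota => /andP[_ hp] /=; rewrite modn_small.
by apply: eq_count => p /=; rewrite modnDl.
Qed.

Lemma cyc_occ_wpow u k w : cyc_occ u (wpow k w) = k * cyc_occ u w.
Proof.
case: k => [|k]; first by [].
case: w => [|x w']; first by rewrite /cyc_occ size_wpow /= !muln0.
set w := x :: w'; rewrite /cyc_occ size_wpow -count_iota_mod.
apply: eq_count => p; rewrite /cyc_occurs_at size_wpow; apply: eq_all => m.
rewrite nth_wpow; last by rewrite ltn_pmod // muln_gt0.
by rewrite (@modn_dvdm (k.+1 * size w)) ?dvdn_mull // modnDml.
Qed.

Lemma nth_rot1 (w : seq T) i : i < size w -> nth x0 (rot 1 w) i = nth x0 w (i.+1 %% size w).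
Proof.
case: w => [|y w] //= hi; rewrite rot1_cons nth_rcons.
case: (ltnP i (size w)) => h; first by rewrite modn_small.
have -> : i = size w by lia.
by rewrite eqxx modnn.
Qed.

Lemma cyc_occ_eq0 (u w : seq T) :
  (forall p, p < size w -> ~~ cyc_occurs_at u w p) -> cyc_occ u w = 0.
Proof.
move=> H; apply/eqP; rewrite -leqn0 leqNgt -has_count; apply/hasPn => p.
by rewrite mem_iota add0n => /andP[_ hp]; apply: H.
Qed.

Lemma cyc_occ_gt0 (u w : seq T) : 0 < cyc_occ u w -> exists2 p, p < size w & cyc_occurs_at u w p.
Proof.
rewrite -has_count => /hasP [p]; rewrite mem_iota add0n => /andP[_ hp] hm.
by exists p.
Qed.

Lemma cyc_occ_head_notin (u w : seq T) : 0 < size u -> nth x0 u 0 \notin w -> cyc_occ u w = 0.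
Proof.
move=> hu hw; apply: cyc_occ_eq0 => p hp; apply/negP => /allP /(_ 0).
rewrite mem_iota hu addn0 => /(_ isT) /eqP E.
by move/negP: hw; apply; rewrite -E mem_nth // ltn_pmod //; lia.
Qed.

(* An occurrence would make the leading run of [a] in [u] cover all of [w]. *)
Lemma cyc_occ_long_run (u w : seq T) a r K : r < size w -> nth x0 w r != a ->
  size w <= K < size u -> (forall m, m < K -> nth x0 u m = a) -> cyc_occ u w = 0.
Proof.
move=> hr hna /andP[hK hKu] hu; apply: cyc_occ_eq0 => p hp; apply/negP => /allP H.
pose m := (r + size w - p) %% size w.
have hm : m < size w by rewrite ltn_pmod //; lia.
have hpm : (p + m) %% size w = r.
  by rewrite modnDmr (_ : p + _ = r + size w) ?modnDr ?modn_small //; lia.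
have /eqP : nth x0 w ((p + m) %% size w) == nth x0 u m by apply: H; rewrite mem_iota; lia.
by rewrite hpm hu; [apply/eqP | lia].
Qed.

End Occurrences.

Section FreeWords.
Variable n : nat.
Local Notation L := (letter n).
Local Notation winv := (@word_inv n).

Lemma linvK : involutive (@linv n).
Proof. by case=> a b; rewrite /linv /= negbK. Qed.

Lemma eq_linvF (x : L) : (linv x == x) = false.
Proof. by case: x => a b; rewrite /linv /= xpair_eqE eqxx /=; case: b. Qed.

Lemma eq_linvC (x y : L) : (linv x == y) = (x == linv y).
Proof. by apply/eqP/eqP => [<-|->]; rewrite linvK. Qed.

Lemma winv_cat (a b : seq L) : winv (a ++ b) = winv b ++ winv a.
Proof. by rewrite /word_inv map_cat rev_cat. Qed.

Lemma winvK : involutive winv.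
Proof. by move=> a; rewrite /word_inv map_rev revK -map_comp (eq_map linvK) map_id. Qed.

Lemma winv_cons (x : L) a : winv (x :: a) = winv a ++ [:: linv x].
Proof. by rewrite -cat1s winv_cat. Qed.

Lemma winv_rcons (x : L) a : winv (rcons a x) = linv x :: winv a.
Proof. by rewrite /word_inv map_rcons rev_rcons. Qed.

Lemma size_winv (a : seq L) : size (winv a) = size a.
Proof. by rewrite /word_inv size_rev size_map. Qed.

Lemma winv_wpow k (w : seq L) : winv (wpow k w) = wpow k (winv w).
Proof. by elim: k => [|k IH] //; rewrite [in LHS]/= winv_cat IH -wpowS. Qed.

Definition no_backtrack (a b : L) := b != linv a.

Lemma reducedE (s : seq L) : reduced s = sorted no_backtrack s.
Proof.
elim: s => [|x [|y s] IH] //.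
by rewrite -[reduced _]/((y != linv x) && reduced (y :: s)) IH.
Qed.

Lemma reduced_winv (s : seq L) : reduced s -> reduced (winv s).
Proof.
rewrite !reducedE /word_inv rev_sorted sorted_map.
by apply: sub_sorted => a b; rewrite /no_backtrack /= linvK eq_sym.
Qed.

Lemma red_id (s : seq L) : reduced s -> red s = s.
Proof.
elim: s => // x s IH H; rewrite /red /= -/(red s) IH; last exact: reduced_behead H.
by case: s H {IH} => [|y s] //= /andP[h _]; rewrite (negbTE h).
Qed.

Lemma pushK (x : L) t : reduced t -> push x (push (linv x) t) = t.
Proof.
case: t => [|y t] /=; first by rewrite eqxx.
case: ifP => [/eqP Ey|Hy] H; last by rewrite /= eqxx.
rewrite linvK in Ey; subst y.
by case: t H => [|z t] //= /andP[hz _]; rewrite (negbTE hz).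
Qed.

Lemma red_cat (p q : seq L) : red (p ++ q) = foldr (@push n) (red q) p.
Proof. by rewrite /red foldr_cat. Qed.

Lemma red_cancel (a b : seq L) x : red (a ++ x :: linv x :: b) = red (a ++ b).
Proof. by rewrite !red_cat; congr foldr; rewrite /red /= -/(red b) pushK // red_reduced. Qed.

Lemma red_cancel_winv (a b c : seq L) : red (a ++ winv c ++ c ++ b) = red (a ++ b).
Proof.
elim: c a b => [|x c IH] a b //=.
rewrite winv_cons -catA /= catA.
have := red_cancel (a ++ winv c) (c ++ b) (linv x); rewrite linvK => ->.
by rewrite -catA IH.
Qed.

Lemma reduced_mul_decomp (g h : seq L) : reduced g -> reduced h ->
  exists a c b, [/\ g = a ++ c, h = winv c ++ b & foldr (@push n) h g = a ++ b].
Proof.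
move=> + Hh; elim: g => [|x g IH] Hg; first by exists [::], [::], h.
have [a [c [b [Eg Eh E]]]] := IH (reduced_behead Hg); rewrite /= E.
case: a {E} Eg => [|y a] Eg; last first.
  exists (x :: y :: a), c, b; split; rewrite ?Eg //=.
  by move: Hg; rewrite Eg /= => /andP[hy _]; rewrite (negbTE hy).
case: b Eh => [|y b] Eh; first by exists [:: x], c, [::]; rewrite Eg.
rewrite /=; case: ifP => [/eqP Ey|Ey]; last by exists [:: x], c, (y :: b); rewrite Eg.
by exists [::], (x :: c), b; rewrite Eg Eh winv_cons -catA Ey.
Qed.

Definition cyc_reduced (w : seq L) := if w is x :: t then last x t != linv x else true.

Lemma cyc_reduced_step w : cyc_reduced w -> cyc_step w = w.
Proof. by case: w => [|x [|y t]] //= h; rewrite (negbTE h). Qed.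

Lemma step_cyc_reduced w : cyc_step w = w -> cyc_reduced w.
Proof.
case: w => [|x [|y t]] //=; first by rewrite eq_sym eq_linvF.
case: ifP => // _ /(congr1 size); rewrite size_take /=; case: ifP => _ /=; lia.
Qed.

Lemma cyc_reduced_winv w : cyc_reduced w -> cyc_reduced (winv w).
Proof.
case: w => [|x t] //=; case/lastP: t => [|t z] /=.
  by rewrite /word_inv /= linvK eq_sym eq_linvF.
by rewrite last_rcons winv_cons winv_rcons /= last_cat /= linvK eq_sym.
Qed.

Lemma cyc_step_cases (w : seq L) :
  cyc_step w = w \/ exists x t, w = x :: t ++ [:: linv x] /\ cyc_step w = t.
Proof.
case: w => [|x [|y t]]; try by left.
rewrite /cyc_step; case: ifP => [/eqP E|]; last by left.
right; exists x, (belast y t); split; first by rewrite lastI E cats1.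
by rewrite lastI size_rcons /= -cats1 take_size_cat.
Qed.

Lemma iter_cyc_step_conj (s : seq L) m :
  exists c, s = c ++ iter m (@cyc_step n) s ++ winv c.
Proof.
elim: m => [|m [c Ec]] /=; first by exists [::]; rewrite cats0.
case: (cyc_step_cases (iter m (@cyc_step n) s)) => [->|[x [t [E1 ->]]]]; first by exists c.
exists (rcons c x); rewrite winv_rcons {1}Ec E1 -cat_rcons.
by rewrite cats0 cat_rcons /= -cats1 -catA.
Qed.

Lemma cyc_red_conj (s : seq L) : exists c, s = c ++ cyc_red s ++ winv c.
Proof. exact: iter_cyc_step_conj. Qed.

(* Each effective step removes two letters, so [size s] steps reach a fixpoint. *)
Lemma cyc_step_cyc_red (s : seq L) : cyc_step (cyc_red s) = cyc_red s.
Proof.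
pose it m := iter m (@cyc_step n) s; rewrite /cyc_red -/(it (size s)).
have shrink m : cyc_step (it m) = it m \/ size (it m) + 2 * m <= size s.
  elim: m => [|m [IH|IH]]; first by right; rewrite addn0.
    by left; rewrite /it /= -/(it m) IH IH.
  case: (cyc_step_cases (it m)) => [E|[x [t [E1 E2]]]].
    by left; rewrite /it /= -/(it m) E E.
  right; rewrite /it /= -/(it m) E2; move: IH; rewrite E1 /= size_cat /=; lia.
case: (shrink (size s)) => // h.
case: (cyc_step_cases (it (size s))) => [//|[x [t [E1 _]]]].
by move: h; rewrite E1 /= size_cat /=; lia.
Qed.

Lemma cyc_step_conj1 (x : L) s : cyc_step (x :: s ++ [:: linv x]) = s.
Proof.
case: s => [|y s]; first by rewrite /= eqxx.
by rewrite /cyc_step /= last_cat /= eqxx size_cat addn1 /= take_size_cat.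
Qed.

Lemma iter_cyc_step_strip (c w : seq L) : iter (size c) (@cyc_step n) (c ++ w ++ winv c) = w.
Proof.
elim: c => [|x c IH]; first by rewrite /= cats0.
by rewrite [size _]/= iterSr winv_cons cat_cons !catA cyc_step_conj1 -!catA.
Qed.

Lemma cyc_red_conj_id (c w : seq L) : cyc_step w = w -> cyc_red (c ++ w ++ winv c) = w.
Proof.
move=> Hw; rewrite /cyc_red.
have h : size c <= size (c ++ w ++ winv c) by rewrite size_cat leq_addr.
by rewrite -(subnK h) iterD iter_cyc_step_strip iter_fix.
Qed.

Lemma red_wpow_conj (c w : seq L) k :
  red (wpow k.+1 (c ++ w ++ winv c)) = red (c ++ wpow k.+1 w ++ winv c).
Proof.
elim: k => [|k IH]; first by rewrite /= !cats0.
have -> : wpow k.+2 (c ++ w ++ winv c) = (c ++ w ++ winv c) ++ wpow k.+1 (c ++ w ++ winv c).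
  by [].
rewrite (red_cat (c ++ w ++ winv c)) IH -red_cat.
have -> : wpow k.+2 w = w ++ wpow k.+1 w by [].
by have := red_cancel_winv (c ++ w) (wpow k.+1 w ++ winv c) c; rewrite -!catA.
Qed.

Lemma reduced_replace_mid (a b1 b2 d : seq L) y : path no_backtrack y b2 -> last y b1 = last y b2 ->
  reduced (a ++ y :: b1 ++ d) -> reduced (a ++ y :: b2 ++ d).
Proof.
rewrite !reducedE !sorted_cat_cons !cat_path => hp hl /and3P[h1 _ h3].
by rewrite h1 hp -hl h3.
Qed.

Lemma path_wpow (x : L) t k : path no_backtrack x t -> no_backtrack (last x t) x ->
  path no_backtrack x (t ++ wpow k (x :: t)).
Proof.
move=> hp hl; elim: k => [|k IH]; first by rewrite cats0.
have -> : wpow k.+1 (x :: t) = x :: t ++ wpow k (x :: t) by [].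
by rewrite cat_path hp /= hl IH.
Qed.

(* The reduction of the power is [c ++ wpow k w ++ winv c], which is already reduced. *)
Lemma cyc_red_wpow (c w : seq L) k : reduced (c ++ w ++ winv c) -> cyc_step w = w ->
  cyc_red (red (wpow k (c ++ w ++ winv c))) = wpow k w.
Proof.
move=> Hr Hw; case: k => [|k] //; rewrite red_wpow_conj.
case: w Hr Hw => [|x t] Hr Hw.
  rewrite (_ : wpow k.+1 [::] = [::]); last by elim: (k.+1) => //= ? ->.
  by have := red_cancel_winv [::] [::] (winv c); rewrite winvK /= cats0 => ->.
have Hl : last x t != linv x by have := step_cyc_reduced Hw.
have Hp : path no_backtrack x t.
  by move: Hr; rewrite reducedE sorted_cat_cons cat_path => /and3P[].
have EW : wpow k.+1 (x :: t) = x :: (t ++ wpow k (x :: t)) by [].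
have LW : last x (t ++ wpow k (x :: t)) = last x t.
  by case: (k) => [|k1]; [rewrite cats0 | rewrite wpowS !last_cat].
have HWr : reduced (c ++ wpow k.+1 (x :: t) ++ winv c).
  rewrite EW; apply: (reduced_replace_mid (b1 := t)) => //.
  by apply: path_wpow; rewrite // /no_backtrack -eq_linvC eq_sym.
rewrite red_id // cyc_red_conj_id //; apply: cyc_reduced_step.
by rewrite EW /= LW.
Qed.

End FreeWords.

Section WhiteheadGraph.
Variables (n : nat) (x0 : letter n).
Local Notation L := (letter n).
Local Notation winv := (@word_inv n).

Definition wh_path_sub (e : rel L) (u : seq L) :=
  forall m, m.+1 < size u -> e (nth x0 u m) (linv (nth x0 u m.+1)).

Definition wh_cycle_sub (e : rel L) (w : seq L) :=
  forall i, i < size w -> e (nth x0 w i) (linv (nth x0 w (i.+1 %% size w))).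

Lemma wh_adj_sym (w : seq L) : symmetric (wh_adj w).
Proof. by move=> a b; apply: eq_has => p; rewrite orbC. Qed.

Lemma wh_cycle_sub_self (w : seq L) : wh_cycle_sub (wh_adj w) w.
Proof.
move=> i hi; have hz : i < size (zip w (rot 1 w)) by rewrite size_zip size_rot minnn.
apply/hasP; exists (nth (x0, x0) (wh_edges w) i).
  by apply: mem_nth; rewrite size_map.
by rewrite (nth_map (x0, x0)) // nth_zip ?size_rot //= nth_rot1 // eqxx.
Qed.

Lemma wh_cycle_sub_winv (w : seq L) : wh_cycle_sub (wh_adj w) (winv w).
Proof.
rewrite /wh_cycle_sub size_winv => i hi; have hw : 0 < size w by lia.
have hj : i.+1 %% size w < size w by rewrite ltn_pmod.
rewrite /word_inv !nth_rev ?size_map // !(nth_map x0) ?size_map; try lia.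
rewrite linvK wh_adj_sym.
set j := size w - (i.+1 %% size w).+1.
have -> : size w - i.+1 = j.+1 %% size w.
  rewrite /j; case: (ltnP i.+1 (size w)) => h.
    by rewrite (modn_small h) modn_small; lia.
  have -> : i.+1 = size w by lia.
  by rewrite modnn subnn (_ : (size w - 1).+1 = size w) ?modnn //; lia.
by apply: wh_cycle_sub_self; rewrite /j; lia.
Qed.

Lemma cyc_occurs_wh_path_sub (e : rel L) (u w : seq L) p :
  wh_cycle_sub e w -> p < size w -> cyc_occurs_at x0 u w p -> wh_path_sub e u.
Proof.
move=> ew hp /allP hm m hmu.
have [i1 i2] : m \in iota 0 (size u) /\ m.+1 \in iota 0 (size u) by rewrite !mem_iota; lia.
rewrite -(eqP (hm m i1)) -(eqP (hm m.+1 i2)).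
have := ew ((p + m) %% size w) (ltn_pmod _ (leq_ltn_trans (leq0n _) hp)).
by rewrite -addn1 modnDml addn1 addnS.
Qed.

Lemma wh_path_sub_cons (e : rel L) (u p q : seq L) x y :
  wh_path_sub e u -> u = p ++ x :: y :: q -> e x (linv y).
Proof.
move=> eu Eu; have := eu (size p).
rewrite Eu !nth_cat ltnn subnn /= ifN; last by rewrite -leqNgt.
by rewrite subSnn; apply; rewrite size_cat /=; lia.
Qed.

(* Removing any vertex leaves everything joined to [a] or to [a^-1], and these two are adjacent. *)
Lemma hub_no_cut_vertex (e : rel L) (a : L) : symmetric e -> e a (linv a) ->
  (forall x, [\/ x = a, x = linv a | e a x /\ e x (linv a)]) -> forall v, ~ cut_vertex e v.
Proof.
move=> e_sym eaa' hub v [x [y [hx hy /negP]]]; apply.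
set e' := fun b c => [&& e b c, b != v & c != v].
have e'_sym : connect_sym e'.
  apply: sym_connect_sym => b c; rewrite /e' e_sym.
  by case: (b != v); case: (c != v); rewrite ?andbF ?andbT.
pose r := if v == a then linv a else a.
have to_r z : z != v -> connect e' z r.
  move=> hz; rewrite /r; case: eqP => hv.
    subst v; case: (hub z) => [hz0|->|[_ h]]; first by rewrite hz0 eqxx in hz.
      exact: connect0.
    by apply: connect1; rewrite /e' h hz eq_linvF.
  have hva : a != v by apply/eqP => ha; apply: hv.
  case: (hub z) hz => [->|->|[h _]] hz; first exact: connect0.
    by apply: connect1; rewrite /e' e_sym eaa' hz hva.
  by apply: connect1; rewrite /e' e_sym h hz hva.
apply: connect_trans (to_r x hx) _.
by rewrite e'_sym; apply: to_r.
Qed.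

End WhiteheadGraph.

Section CountingQuasimorphism.
Variables (n : nat) (x0 : letter n) (u : seq (letter n)).
Local Notation L := (letter n).
Local Notation winv := (@word_inv n).

Definition brooks (s : seq L) : Z :=
  (Z.of_nat (occ x0 u s) - Z.of_nat (occ x0 u (winv s)))%Z.

(* Homogenization of [brooks]: cyclic counts on the cyclic reduction. *)
Definition hbrooks (s : seq L) : Z :=
  (Z.of_nat (cyc_occ x0 u (cyc_red s)) - Z.of_nat (cyc_occ x0 u (winv (cyc_red s))))%Z.

Definition hbrooks_qm (g : FG n) : R := IZR (hbrooks (proj1_sig g)).

Lemma occ_catZ (s t : seq L) :
  (Z.of_nat (occ x0 u s) + Z.of_nat (occ x0 u t) <= Z.of_nat (occ x0 u (s ++ t)) <=
   Z.of_nat (occ x0 u s) + Z.of_nat (occ x0 u t) + Z.of_nat (size u))%Z.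
Proof.
case/andP: (occ_cat x0 u s t) => /leP h1 /leP h2.
by rewrite -!Nat2Z.inj_add; split; apply/Nat2Z.inj_le.
Qed.

Lemma occ_le_cyc_occZ (w : seq L) :
  (Z.of_nat (occ x0 u w) <= Z.of_nat (cyc_occ x0 u w) <=
   Z.of_nat (occ x0 u w) + Z.of_nat (size u))%Z.
Proof.
case/andP: (occ_le_cyc_occ x0 u w) => /leP h1 /leP h2.
by rewrite -Nat2Z.inj_add; split; apply/Nat2Z.inj_le.
Qed.

Lemma brooks_defect a b c :
  (Z.abs (brooks (a ++ b) - brooks (a ++ c) - brooks (winv c ++ b)) <= 3 * Z.of_nat (size u))%Z.
Proof.
rewrite /brooks !winv_cat winvK.
have := occ_catZ a b; have := occ_catZ (winv b) (winv a); have := occ_catZ a c.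
have := occ_catZ (winv c) (winv a); have := occ_catZ (winv c) b; have := occ_catZ (winv b) c.
lia.
Qed.

Lemma hbrooks_brooks s : (Z.abs (hbrooks s - brooks s) <= 4 * Z.of_nat (size u))%Z.
Proof.
have [c Ec] := cyc_red_conj s; rewrite /hbrooks /brooks.
set w := cyc_red s in Ec *; rewrite Ec !winv_cat winvK -catA.
have := occ_catZ c (w ++ winv c); have := occ_catZ w (winv c).
have := occ_catZ c (winv w ++ winv c); have := occ_catZ (winv w) (winv c).
have := occ_le_cyc_occZ w; have := occ_le_cyc_occZ (winv w).
lia.
Qed.

Lemma hbrooks_qm_quasimorphism : quasimorphism hbrooks_qm.
Proof.
exists (IZR (15 * Z.of_nat (size u))) => [[g Hg] [h Hh]].
rewrite /hbrooks_qm -!minus_IZR Rabs_Zabs; apply: IZR_le.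
rewrite /fmul /mkFG; cbn [proj1_sig]; rewrite red_cat (red_id Hh).
have [a [c [b [-> -> ->]]]] := reduced_mul_decomp Hg Hh.
have := @brooks_defect a b c.
have := @hbrooks_brooks (a ++ b); have := @hbrooks_brooks (a ++ c).
have := @hbrooks_brooks (winv c ++ b).
lia.
Qed.

Lemma hbrooks_wpow (s : seq L) k : reduced s ->
  hbrooks (red (wpow k s)) = (Z.of_nat k * hbrooks s)%Z /\
  hbrooks (red (wpow k (winv s))) = (- (Z.of_nat k * hbrooks s))%Z.
Proof.
move=> Hs; have [c Ec] := cyc_red_conj s; have Hw := cyc_step_cyc_red s.
set w := cyc_red s in Ec Hw *.
have Hw' : cyc_step (winv w) = winv w.
  by apply/cyc_reduced_step/cyc_reduced_winv/step_cyc_reduced.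
have Ei : winv s = c ++ winv w ++ winv c by rewrite {1}Ec !winv_cat winvK catA.
have P1 : cyc_red (red (wpow k s)) = wpow k w by rewrite {1}Ec cyc_red_wpow // -Ec.
have P2 : cyc_red (red (wpow k (winv s))) = wpow k (winv w).
  by rewrite Ei cyc_red_wpow // -Ei reduced_winv.
by rewrite /hbrooks -/w P1 P2 !winv_wpow !cyc_occ_wpow winvK; split; lia.
Qed.

Lemma hbrooks_qm_homogeneous : homogeneous hbrooks_qm.
Proof.
move=> [g Hg] k; rewrite /hbrooks_qm /fpow /= -mult_IZR; congr IZR.
case: (Z.leb_spec0 0 k) => hk /=.
  by case: (hbrooks_wpow (Z.to_nat k) Hg) => -> _; rewrite Z2Nat.id.
by case: (hbrooks_wpow (Z.to_nat (- k)) Hg) => _ ->; rewrite Z2Nat.id; lia.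
Qed.

(* A cyclic occurrence of [u] or [u^-1] in [w] puts the edges of [u] into Omega(w). *)
Lemma hbrooks_qm_cut :
  (forall w v, wh_path_sub x0 (wh_adj w) u -> ~ cut_vertex (wh_adj w) v) ->
  forall g, in_cut g -> hbrooks_qm g = R0.
Proof.
move=> no_cut g [v hv]; rewrite /hbrooks_qm /hbrooks.
set w := cyc_red (proj1_sig g) in hv *.
have no_occ V : wh_cycle_sub x0 (wh_adj w) V -> cyc_occ x0 u V = 0.
  move=> eV; case: (posnP (cyc_occ x0 u V)) => // /cyc_occ_gt0 [p hp hm].
  by case: (no_cut w v (cyc_occurs_wh_path_sub eV hp hm)).
by rewrite !no_occ //; [exact: wh_cycle_sub_winv | exact: wh_cycle_sub_self].
Qed.

End CountingQuasimorphism.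

Section TestWords.
Variable m : nat.
Local Notation N := m.+2.
Local Notation L := (letter N).
Local Notation winv := (@word_inv N).

Definition a0 : L := (ord0, false).
Definition gen (j : nat) (b : bool) : L := (inord j, b).
Definition hub_block j : seq L := [:: a0; gen j false; a0; gen j true].
Definition hub_blocks : seq L := flatten (map hub_block (iota 1 m.+1)).

(* [size (test_word i) = step * i.+1], so the leading run of [a0] in [test_word i]
   is longer than every [test_word j] with [j < i]. *)
Definition step := 4 * m.+1 + 2.
Definition test_word i : seq L := nseq (step * i).+1 a0 ++ hub_blocks ++ [:: a0].

Lemma inord_neq0 j : 0 < j < N -> (inord j : 'I_N) != ord0.
Proof. by move=> hj; apply/eqP => /(congr1 val); rewrite /= inordK //; lia. Qed.

Lemma gen_range j : j \in iota 1 m.+1 -> 0 < j < N.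
Proof. by rewrite mem_iota; lia. Qed.

Lemma size_hub_blocks js : size (flatten (map hub_block js)) = 4 * size js.
Proof. by elim: js => //= j js IH; rewrite IH mulnS. Qed.

Lemma size_test_word i : size (test_word i) = step * i.+1.
Proof. by rewrite /test_word !size_cat size_nseq size_hub_blocks size_iota /step mulnS /=; lia. Qed.

Lemma no_backtrack_a0 : no_backtrack a0 a0.
Proof. by rewrite /no_backtrack eq_sym eq_linvF. Qed.

Lemma path_hub_blocks js (x : L) : {subset js <= iota 1 m.+1} -> x != linv a0 ->
  path (@no_backtrack N) x (flatten (map hub_block js) ++ [:: a0]).
Proof.
elim: js x => [|j js IH] x Hj hx; first by rewrite /= /no_backtrack andbT eq_sym eq_linvC.
have hj := inord_neq0 (gen_range (Hj j (mem_head _ _))).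
have hgen b : gen j b != linv a0 by rewrite /gen /a0 /linv xpair_eqE negb_and hj.
rewrite /= -/(flatten _) /no_backtrack eq_sym eq_linvC hx.
rewrite [gen j true == _]eq_sym [a0 == _]eq_sym !eq_linvC !hgen /= eq_sym eq_linvC hgen.
by apply: IH => [j' hj'|]; [apply: Hj; rewrite inE hj' orbT | exact: hgen].
Qed.

Lemma reduced_test_word i : reduced (test_word i).
Proof.
rewrite reducedE.
change (path (@no_backtrack N) a0 (nseq (step * i) a0 ++ hub_blocks ++ [:: a0])).
elim: (step * i) => [|k IH]; last by apply/andP; split; [exact: no_backtrack_a0 | exact: IH].
by apply: path_hub_blocks => //; rewrite eq_sym eq_linvF.
Qed.

Lemma cyc_red_test_word i : cyc_red (test_word i) = test_word i.
Proof.
rewrite /cyc_red iter_fix //; apply: cyc_reduced_step.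
change (last a0 (nseq (step * i) a0 ++ hub_blocks ++ [:: a0]) != linv a0).
by rewrite !last_cat.
Qed.

Lemma nth_test_word_run i p : p <= step * i -> nth a0 (test_word i) p = a0.
Proof. by move=> h; rewrite nth_cat size_nseq ltnS h nth_nseq ltnS h. Qed.

Lemma nth_test_word_gen i : nth a0 (test_word i) (step * i).+2 = gen 1 false.
Proof. by rewrite nth_cat size_nseq ltnNge leqnSn /= subSn // subnn. Qed.

Lemma linv_a0_notin_test_word i : linv a0 \notin test_word i.
Proof.
have : linv a0 \notin hub_blocks.
  apply/negP => /flattenP [b /mapP [j /gen_range /inord_neq0 hj0 ->]].
  by rewrite !inE /a0 /gen /linv /= !xpair_eqE eq_sym (negbTE hj0).
by rewrite !mem_cat mem_nseq mem_seq1 eq_linvF andbF orbF => ->.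
Qed.

Lemma a0_notin_winv_test_word i : a0 \notin winv (test_word i).
Proof.
rewrite /word_inv mem_rev; apply/mapP => -[x hx hx0].
by move: (linv_a0_notin_test_word i); rewrite hx0 linvK hx.
Qed.

Lemma test_word_hub i :
  test_word i = nseq (step * i) a0 ++ [:: a0, a0 & behead hub_blocks ++ [:: a0]].
Proof. by rewrite /test_word -[(step * i).+1]addn1 nseqD -catA. Qed.

Lemma test_word_block i j : 0 < j < N ->
  exists p q, test_word i = p ++ [:: a0, gen j false, a0, gen j true, a0 & q].
Proof.
move=> hj; have Eiota : iota 1 m.+1 = iota 1 j.-1 ++ j :: iota j.+1 (m.+1 - j).
  rewrite -[in LHS](_ : j.-1 + (m.+1 - j).+1 = m.+1); last by lia.
  by rewrite iotaD (_ : 1 + j.-1 = j) //; lia.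
have [q Eq] : exists q, flatten (map hub_block (iota j.+1 (m.+1 - j))) ++ [:: a0] = a0 :: q.
  by case: (m.+1 - j) => [|l]; eexists.
exists (nseq (step * i).+1 a0 ++ flatten (map hub_block (iota 1 j.-1))), q.
by rewrite /test_word /hub_blocks Eiota map_cat flatten_cat -!catA /= Eq.
Qed.

Lemma wh_path_sub_test_word_hub (e : rel L) i : wh_path_sub a0 e (test_word i) ->
  e a0 (linv a0) /\ forall x, [\/ x = a0, x = linv a0 | e a0 x /\ e x (linv a0)].
Proof.
move=> ew; split; first exact: wh_path_sub_cons ew (test_word_hub i).
move=> [x b]; have [-> | x_neq0] := eqVneq x ord0; first by case: b; [apply: Or32 | apply: Or31].
have hj : 0 < val x < N by rewrite ltn_ord andbT lt0n; exact: x_neq0.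
have [p [q Eu]] := test_word_block i hj.
set g := gen (val x) in Eu.
have E2 : test_word i = (p ++ [:: a0]) ++ g false :: a0 :: g true :: a0 :: q by rewrite Eu -catA.
have E3 : test_word i = (p ++ [:: a0; g false]) ++ a0 :: g true :: a0 :: q by rewrite Eu -catA.
have E4 : test_word i = (p ++ [:: a0; g false; a0]) ++ g true :: a0 :: q by rewrite Eu -catA.
rewrite -[x]inord_val -/(g b); apply: Or33; case: b; split.
- exact: wh_path_sub_cons ew Eu.
- exact: wh_path_sub_cons ew E4.
- exact: wh_path_sub_cons ew E3.
- exact: wh_path_sub_cons ew E2.
Qed.

Lemma test_word_no_cut i w v : wh_path_sub a0 (wh_adj w) (test_word i) -> ~ cut_vertex (wh_adj w) v.
Proof.
move=> /wh_path_sub_test_word_hub [hub_loop hub].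
exact: hub_no_cut_vertex (@wh_adj_sym N w) hub_loop hub v.
Qed.

Lemma hbrooks_test_word i j :
  hbrooks a0 (test_word i) (test_word j) = Z.of_nat (cyc_occ a0 (test_word i) (test_word j)).
Proof.
rewrite /hbrooks cyc_red_test_word (@cyc_occ_head_notin _ _ _ (winv (test_word j))).
- by rewrite Z.sub_0_r.
- by rewrite size_test_word /step; lia.
by rewrite nth_test_word_run // a0_notin_winv_test_word.
Qed.

Lemma hbrooks_test_word_lt i j : j < i -> hbrooks a0 (test_word i) (test_word j) = 0%Z.
Proof.
move=> hij; rewrite hbrooks_test_word.
rewrite (@cyc_occ_long_run _ a0 _ _ a0 (step * j).+2 (step * i)) //.
- by rewrite size_test_word mulnS /step; lia.
- by rewrite nth_test_word_gen /a0 /gen xpair_eqE negb_and inord_neq0.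
- by rewrite !size_test_word leq_mul2l hij ltn_mul2l orbT /step; lia.
by move=> k hk; rewrite nth_test_word_run // ltnW.
Qed.

Lemma hbrooks_test_word_diag j : (0 < hbrooks a0 (test_word j) (test_word j))%Z.
Proof.
rewrite hbrooks_test_word; suff : 0 < cyc_occ a0 (test_word j) (test_word j) by lia.
rewrite -has_count; apply/hasP; exists 0; first by rewrite mem_iota size_test_word /step; lia.
by apply/allP => k; rewrite mem_iota add0n => /andP[_ hk]; rewrite modn_small.
Qed.

End TestWords.

Lemma sum_map_eq0 (f : nat -> R) s : (forall i, i \in s -> f i = R0) ->
  foldr Rplus R0 (map f s) = R0.
Proof.
elim: s => [|i s IH] //= f0; rewrite f0 ?mem_head // IH ?Rplus_0_r // => j js.
by apply: f0; rewrite inE js orbT.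
Qed.

Lemma sum_map_single (f : nat -> R) s j : uniq s -> j \in s ->
  (forall i, i \in s -> i != j -> f i = R0) -> foldr Rplus R0 (map f s) = f j.
Proof.
elim: s => [|i s IH] //= /andP[i_notin s_uniq]; rewrite inE => js f0.
have [ij|ij] := eqVneq i j.
  subst j; rewrite sum_map_eq0 ?Rplus_0_r // => k ks.
  by apply: f0; [rewrite inE ks orbT | apply: contraNneq i_notin => ki; rewrite -ki].
rewrite f0 ?mem_head // Rplus_0_l IH //; first by case/orP: js => // /eqP ji; rewrite ji eqxx in ij.
by move=> k ks; apply: f0; rewrite inE ks orbT.
Qed.

Lemma lin_indep_triangular n k (Q : nat -> FG n -> R) (t : nat -> FG n) :
  (forall i j, j < i < k -> Q i (t j) = R0) -> (forall j, j < k -> Q j (t j) <> R0) ->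
  lin_indep k Q.
Proof.
move=> Q_low Q_diag c Hc i; elim/ltn_ind: i => j IH hj.
have := Hc (t j); rewrite (@sum_map_single _ _ j) ?iota_uniq ?mem_iota //; last first.
  move=> i; rewrite mem_iota => /andP[_ hi] ij.
  case: (ltngtP i j) => [lt_ij|lt_ji|/eqP]; last by rewrite (negbTE ij).
    by rewrite IH ?Rmult_0_l //; lia.
  by rewrite Q_low ?Rmult_0_r // lt_ji.
by case/Rmult_integral => // /Q_diag.
Qed.

Theorem mainTheorem11 (n : nat) (hn : (2 <= n)%N) :
  forall k : nat, exists Q : nat -> FG n -> R,
    (forall i, (i < k)%N ->
       [/\ quasimorphism (Q i), homogeneous (Q i) &
           forall g : FG n, in_cut g -> Q i g = R0])
    /\ lin_indep k Q.
Proof.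
case: n hn => [|[|m]] // _ k.
exists (fun i => hbrooks_qm (a0 m) (test_word m i)); split.
  move=> i _; split.
  - exact: hbrooks_qm_quasimorphism.
  - exact: hbrooks_qm_homogeneous.
  - exact: hbrooks_qm_cut (@test_word_no_cut m i).
have test_val j : proj1_sig (mkFG (test_word m j)) = test_word m j.
  exact: red_id (reduced_test_word m j).
apply: (@lin_indep_triangular _ _ _ (fun j => mkFG (test_word m j))) => [i j hij | j _].
  by rewrite /hbrooks_qm test_val hbrooks_test_word_lt //; case/andP: hij.
rewrite /hbrooks_qm test_val => /(eq_IZR _ 0).
by have := hbrooks_test_word_diag m j; lia.
Qed.
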